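(* Let $b\in\mathbb{N}\setminus\{1\}$, $\phi:\mathbb{R}\to\mathbb{R}$ periodic with period $1$, vanishing on $\mathbb{Z}$, and H\''older continuous with exponent $\gamma\in(0,1]$, and $\psi:(0,\infty)\to(0,\infty)$ submultiplicative with $\psi(b^{-1})\in(0,1)$ and $\psi(b^{-1})>b^{-\gamma}$. Fix a sign $\sigma\in\{+1,-1\}$ (corresponding to $f(t)=\sum_{m=0}^\infty\sigma\,\psi(b^{-m})\phi(b^mt)$, i.e. $\xi_m=\sigma$ for all $m$), and let $Z_n:=\sum_{m=1}^n(\sigma\psi(b^{-1})b)^{-m}Y_m$, $n\in\mathbb{N}$. Then the series $Z:=\sum_{m=1}^\infty(\sigma\psi(b^{-1})b)^{-m}Y_m$ is well-defined (converges almost surely), and for every $p>0$ the family $\{|Z_n|^p:n\in\mathbb{N}\}$ is uniformly integrable and $\mathbb{E}(|Z_n|^p)\to\mathbb{E}(|Z|^p)$ as $n\to\infty$.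
   Context: $\psi$ submultiplicative: $\psi(xy)\le\psi(x)\psi(y)$ for $x,y>0$. For $m\in\mathbb{N}$, $k\in\{0,\dots,b^m-1\}$ let $\lambda_{m,k}:=b^m(\phi((k+1)b^{-m})-\phi(kb^{-m}))$. Let $(U_n)_{n\in\mathbb{N}}$ be i.i.d. uniform on $\{0,\dots,b-1\}$, $R_m:=\sum_{i=1}^mU_ib^{i-1}$, $Y_m:=\lambda_{m,R_m}$. *)

From HB Require Import structures.
From mathcomp Require Import all_boot all_order all_algebra.
From mathcomp Require Import all_classical all_reals all_analysis.
Set Implicit Arguments. Unset Strict Implicit. Unset Printing Implicit Defensive.
Import Order.TTheory GRing.Theory Num.Theory.
Import numFieldNormedType.Exports.
Local Open Scope classical_set_scope.
Local Open Scope ring_scope.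

Definition lam {R : realType} (b : nat) (phi : R -> R) (m k : nat) : R :=
  (b%:R ^+ m) * (phi (k.+1%:R / b%:R ^+ m) - phi (k%:R / b%:R ^+ m)).

Definition Rdig {T : Type} (b : nat) (U : nat -> T -> nat) (m : nat) (x : T) : nat :=
  (\sum_(1 <= i < m.+1) U i x * b ^ (i.-1))%N.

Definition Yrv {R : realType} {T : Type} (b : nat) (phi : R -> R)
  (U : nat -> T -> nat) (m : nat) (x : T) : R := lam b phi m (Rdig b U m x).

Definition Zn {R : realType} {T : Type} (b : nat) (phi psi : R -> R) (sigma : R)
  (U : nat -> T -> nat) (n : nat) (x : T) : R :=
  \sum_(1 <= m < n.+1) (sigma * psi (b%:R)^-1 * b%:R) ^- m * Yrv b phi U m x.

Definition discrete_mutual_indep {d : measure_display} {T : measurableType d}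
  {R : realType} (P : probability T R) (U : nat -> T -> nat) : Prop :=
  (forall i k, measurable [set x | U i x = k]) /\
  forall (s : seq nat) (k : nat -> nat), uniq s ->
    P (\bigcap_(i in [set` s]) [set x | U i x = k i]) =
    (\prod_(i <- s) P [set x | U i x = k i])%E.

Definition uniform_digit {d : measure_display} {T : measurableType d}
  {R : realType} (P : probability T R) (b : nat) (V : T -> nat) : Prop :=
  forall k, (k < b)%N -> P [set x | V x = k] = (b%:R^-1)%:E.

Local Open Scope ereal_scope.
Definition unif_integrable {d : measure_display} {T : measurableType d}
  {R : realType} (P : probability T R) (X : nat -> T -> R) : Prop :=
  (fun K : R => ereal_sup [set \int[P]_(x in [set x | (K < `|X n x|)%R])
                                   (`|X n x|)%:E | n in [set: nat]])
    @ +oo%R --> 0.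

From HB Require Import structures.
From mathcomp Require Import all_boot all_order all_algebra.
From mathcomp Require Import all_classical all_reals all_analysis.
From mathcomp Require Import measurable_realfun.
From mathcomp Require Import ring.
Import Order.TTheory GRing.Theory Num.Theory.
Import numFieldNormedType.Exports.
Local Open Scope classical_set_scope.
Local Open Scope ring_scope.

(** Hölder continuity of [phi] gives [|lam b phi m k| <= |C| (b^(1-gamma))^m],
    so the [m]-th term of [Z] is bounded by [|C| q^m] with
    [q = b^-gamma / psi(1/b) < 1]. Hence [Z_n] converges at every point and
    [|Z_n| <= |C| q / (1 - q)] uniformly in [n]: uniform integrability of
    [|Z_n|^p] is then trivial and the moments converge by dominated
    convergence. *)

Section nat_valued_measurable.
Context {d : measure_display} {T : measurableType d}.

Lemma measurable_fun_nat_fibres (h : T -> nat) :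
  (forall k, measurable [set x | h x = k]) -> measurable_fun setT h.
Proof.
move=> hk _ A _; rewrite setTI.
rewrite (_ : h @^-1` A = \bigcup_(k in A) [set x | h x = k]).
  exact: bigcup_measurable.
by apply/seteqP; split => [x Ax|x [k Ak /= ->]] //; exists (h x).
Qed.

Lemma measurable_fun_nat_comp2 (G : nat -> nat -> nat) (h f : T -> nat) :
  measurable_fun setT h -> measurable_fun setT f ->
  measurable_fun setT (fun x => G (h x) (f x)).
Proof.
move=> mh mf; apply: measurable_fun_nat_fibres => k.
rewrite (_ : [set x | _] = \bigcup_i \bigcup_(j in [set j | G i j = k])
                             (h @^-1` [set i] `&` f @^-1` [set j])).
  by apply: bigcupT_measurable => i; apply: bigcup_measurable => j _;
    apply: measurableI; rewrite -[_ @^-1` _]setTI; [exact: mh | exact: mf].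
apply/seteqP; split => [x <-|x [i _ [j /= <- [/= -> ->]]]] //.
by exists (h x) => //; exists (f x).
Qed.

Lemma measurable_Rdig (b : nat) (U : nat -> T -> nat) (m : nat) :
  (forall i, measurable_fun setT (U i)) -> measurable_fun setT (Rdig b U m).
Proof.
move=> mU; elim: m => [|m IH].
  by rewrite /Rdig; under eq_fun do rewrite big_geq //; exact: measurable_cst.
have -> : Rdig b U m.+1 = fun x => (Rdig b U m x + U m.+1 x * b ^ m)%N.
  by apply/funext => x; rewrite /Rdig big_nat_recr.
exact: (measurable_fun_nat_comp2 (fun r u => r + u * b ^ m)%N _ _ IH (mU m.+1)).
Qed.

Lemma measurable_Zn {R : realType} (b : nat) (phi psi : R -> R) (sigma : R)
  (U : nat -> T -> nat) (n : nat) :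
  (forall i, measurable_fun setT (U i)) ->
  measurable_fun setT (Zn b phi psi sigma U n).
Proof.
move=> mU; apply: measurable_sum => m.
exact: (measurableT_comp (f := fun k => _ * lam b phi m k) _
  (measurable_Rdig b U m mU)).
Qed.

End nat_valued_measurable.

Lemma powR_invX (R : realType) (x g : R) (m : nat) : 0 <= x ->
  ((x ^+ m)^-1) `^ g = (x `^ (- g)) ^+ m.
Proof.
move=> x0; rewrite -powR_invn // powRAC powR_invn ?powR_ge0 //.
by rewrite powRN exprVn.
Qed.

Section holder_increments.
Variables (R : realType) (b : nat) (phi : R -> R) (gamma C : R).
Hypothesis b_gt0 : (0 < b)%N.
Hypothesis phi_holder : forall s t, `|phi s - phi t| <= C * `|s - t| `^ gamma.

Let b_ge0 : 0 <= b%:R :> R. Proof. exact: ler0n. Qed.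

Lemma norm_lam_le m k :
  `|lam b phi m k| <= `|C| * (b%:R * b%:R `^ (- gamma)) ^+ m.
Proof.
have step : k.+1%:R / b%:R ^+ m - k%:R / b%:R ^+ m = (b%:R ^+ m)^-1 :> R.
  by rewrite -mulrBl -natrB // subSnn mul1r.
rewrite /lam normrM ger0_norm ?exprn_ge0 // exprMn mulrCA.
apply: ler_wpM2l; first exact: exprn_ge0.
apply: le_trans (phi_holder _ _) _.
rewrite step ger0_norm ?invr_ge0 ?exprn_ge0 // powR_invX //.
by rewrite ler_wpM2r ?exprn_ge0 ?powR_ge0 // ler_norm.
Qed.

Lemma norm_scaled_lam_le (a : R) m k : a != 0 ->
  `|(a * b%:R) ^- m * lam b phi m k| <=
    `|C| * (b%:R `^ (- gamma) / `|a|) ^+ m.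
Proof.
move=> a0; have bR0 : b%:R != 0 :> R by rewrite pnatr_eq0 -lt0n.
rewrite normrM normfV normrX normrM (ger0_norm b_ge0).
apply: le_trans (ler_wpM2l _ (norm_lam_le m k)) _.
  by rewrite invr_ge0 exprn_ge0 // mulr_ge0.
rewrite mulrCA -exprVn -exprMn.
suff -> : (`|a| * b%:R)^-1 * (b%:R * b%:R `^ (- gamma)) =
          b%:R `^ (- gamma) / `|a| by [].
by field; rewrite normr_eq0 a0 bR0.
Qed.

End holder_increments.

Section geometric_domination.
Context {R : realType} {a : nat -> R} {c q : R}.
Hypotheses (q_gt0 : 0 < q) (q_lt1 : q < 1).
Hypothesis a_le : forall m, `|a m| <= c * q ^+ m.

Let c_ge0 : 0 <= c.
Proof. by have := a_le 0; rewrite expr0 mulr1; exact: le_trans. Qed.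

Let norm_q_lt1 : `|q| < 1. Proof. by rewrite gtr0_norm. Qed.

Let partial_sumE n : \sum_(1 <= m < n.+1) a m = series (fun k => a k.+1) n.
Proof. by rewrite seriesEnat /= big_add1. Qed.

Let shifted_le k : `|a k.+1| <= geometric (c * q) q k.
Proof. by rewrite /geometric /= -mulrA -exprS. Qed.

Lemma cvg_geometric_dominated : cvgn (fun n => \sum_(1 <= m < n.+1) a m).
Proof.
rewrite (funext partial_sumE); apply: normed_cvg.
apply: (series_le_cvg _ _ shifted_le) => //.
  by move=> k; rewrite /geometric /= mulr_ge0 ?exprn_ge0 ?mulr_ge0 // ltW.
exact: is_cvg_geometric_series.
Qed.

Lemma norm_geometric_dominated_le n :
  `|\sum_(1 <= m < n.+1) a m| <= c * q / (1 - q).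
Proof.
rewrite partial_sumE seriesEnat /=; apply: le_trans (ler_norm_sum _ _ _) _.
apply: le_trans (geometric_le_lim n _ _ _) => //; last first.
  by rewrite mulr_ge0 // ltW.
by rewrite seriesEnat; apply: ler_sum => k _.
Qed.

End geometric_domination.

Lemma continuous_normr_powR (R : realType) (p : R) : 0 < p ->
  continuous (fun x : R => `|x| `^ p).
Proof.
move=> p0 x; have [->|x0] := eqVneq x 0.
  apply/cvgrPdist_lt => e e0; near=> t.
  rewrite normr0 powR0 ?gt_eqF // sub0r normrN ger0_norm ?powR_ge0 //.
  have -> : e = (e `^ p^-1) `^ p.
    by rewrite -powRrM mulVf ?powRr1 ?gt_eqF // ltW.
  apply: gt0_ltr_powR => //; rewrite ?nnegrE ?powR_ge0 ?normr_ge0 //.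
  near: t; exists (e `^ p^-1); first exact: powR_gt0.
  by move=> t /=; rewrite sub0r normrN.
have powR_cont : (fun y : R => y `^ p) @ `|x| --> `|x| `^ p.
  apply: (@differentiable_continuous _ _ _ `|x| (fun y : R => y `^ p)).
  apply/derivable1_diffP.
  by apply: derivable_powR; rewrite in_itv /= andbT normr_gt0.
apply: cvg_comp powR_cont; exact: norm_continuous.
Unshelve. all: by end_near. Qed.

Section bounded_convergence.
Context {d : measure_display} {T : measurableType d} {R : realType}.
Context {X : nat -> T -> R} {M : R}.
Hypothesis X_le : forall n x, `|X n x| <= M.

Lemma bounded_unif_integrable (P : probability T R) : unif_integrable P X.
Proof.
apply: cvg_near_cst; near=> K => /=.
have MK : M < K by near: K; apply: nbhs_pinfty_gt; rewrite num_real.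
have tail0 n : [set x | K < `|X n x|] = set0.
  apply/seteqP; split => x //=.
  by move=> /lt_le_trans/(_ (X_le n x))/(lt_trans MK); rewrite ltxx.
rewrite (_ : [set _ | n in _] = [set 0%E]) ?ereal_sup1 //.
apply/seteqP; split => [y [n _ <-]|y ->] /=.
  by rewrite tail0 integral_set0.
by exists 0%N => //; rewrite tail0 integral_set0.
Unshelve. all: by end_near. Qed.

Lemma bounded_cvg_integral (mu : {finite_measure set T -> \bar R})
  (f : T -> R) :
  (forall n, measurable_fun setT (X n)) -> (forall x, X ^~ x @ \oo --> f x) ->
  (fun n => \int[mu]_x (X n x)%:E)%E @ \oo --> (\int[mu]_x (f x)%:E)%E.
Proof.
move=> mX Xf.
have [|||||_ _ //] := @dominated_convergence _ _ _ mu setT measurableT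
  (fun n x => (X n x)%:E) (EFin \o f) (fun _ => M%:E).
- by move=> n; apply/measurable_EFinP.
- by apply/measurable_EFinP; exact: measurable_fun_cvg mX _.
- by apply: aeW => x _; apply: cvg_EFin; [exact: nearW | exact: Xf].
- exact: finite_measure_integrable_cst.
- by apply: aeW => x n _; rewrite lee_fin.
Qed.

End bounded_convergence.

Theorem lemma3p1 (R : realType) (d : measure_display) (T : measurableType d)
  (P : probability T R) (b : nat) (phi psi : R -> R) (gamma sigma : R)
  (U : nat -> T -> nat) :
  (2 <= b)%N ->
  (forall t, phi (t + 1) = phi t) ->
  (forall z : int, phi z%:~R = 0) ->
  0 < gamma -> gamma <= 1 ->
  (exists C : R, forall s t, `|phi s - phi t| <= C * `|s - t| `^ gamma) ->
  (forall x, 0 < x -> 0 < psi x) ->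
  (forall x y, 0 < x -> 0 < y -> psi (x * y) <= psi x * psi y) ->
  0 < psi (b%:R)^-1 -> psi (b%:R)^-1 < 1 ->
  b%:R `^ (- gamma) < psi (b%:R)^-1 ->
  (sigma = 1 \/ sigma = -1) ->
  discrete_mutual_indep P U ->
  (forall i, uniform_digit P b (U i)) ->
  let Z := fun x => limn (fun n => Zn b phi psi sigma U n x) in
  {ae P, forall x, cvgn (fun n => Zn b phi psi sigma U n x)} /\
  forall p : R, 0 < p ->
    unif_integrable P (fun n x => `|Zn b phi psi sigma U n x| `^ p) /\
    (fun n => (\int[P]_x (`|Zn b phi psi sigma U n x| `^ p)%:E)%E) @ \oo -->
      (\int[P]_x (`|Z x| `^ p)%:E)%E.
Proof.
move=> b_ge2 _ _ _ _ [C holder] _ _ psi_gt0 _ psi_gt hsigma [mU _] _ Z.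
have b_gt0 : (0 < b)%N by apply: leq_trans b_ge2.
set a := sigma * psi (b%:R)^-1.
have norm_a : `|a| = psi (b%:R)^-1.
  by rewrite /a; case: hsigma => ->; rewrite ?mulN1r ?normrN ?mul1r gtr0_norm.
have a_neq0 : a != 0 by rewrite -normr_eq0 norm_a gt_eqF.
set q := b%:R `^ (- gamma) / psi (b%:R)^-1.
have q_gt0 : 0 < q by rewrite divr_gt0 // powR_gt0 // ltr0n.
have q_lt1 : q < 1 by rewrite ltr_pdivrMr // mul1r.
have term_le x m : `|(a * b%:R) ^- m * Yrv b phi U m x| <= `|C| * q ^+ m.
  by rewrite /q -norm_a; exact: norm_scaled_lam_le.
have Zn_cvg x := cvg_geometric_dominated q_gt0 q_lt1 (term_le x).
split; first exact: aeW.
move=> p p_gt0.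
have Zn_le n x := norm_geometric_dominated_le q_gt0 q_lt1 (term_le x) n.
pose X n x := `|Zn b phi psi sigma U n x| `^ p.
have Xn_le n x : `|X n x| <= (`|C| * q / (1 - q)) `^ p.
  rewrite /X ger0_norm ?powR_ge0 //.
  apply: ge0_ler_powR; rewrite ?nnegrE ?(ltW p_gt0) //.
    exact: le_trans (normr_ge0 _) (Zn_le n x).
  exact: Zn_le.
split; first exact: bounded_unif_integrable Xn_le P.
apply: (bounded_cvg_integral Xn_le P (fun x => `|Z x| `^ p)) => [n|x].
  apply: measurableT_comp (measurable_powR p) _.
  apply: measurableT_comp (@normr_measurable _ setT) _.
  by apply: measurable_Zn => i; exact: measurable_fun_nat_fibres.
apply: (@continuous_cvg _ _ _ _ _ (Zn b phi psi sigma U ^~ x)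
  (fun y : R => `|y| `^ p)).
  exact: continuous_normr_powR.
exact: Zn_cvg.
Qed.
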